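(* Let $X$ and $Y$ be Banach spaces such that the pair $(X,Y)$ fails the uniform sBPBp. Then the pair $(\ell_2(X),\ell_\infty(Y))$ fails the sBPBp.
   Context: Scalars $\mathbb{K}=\mathbb{R}$ or $\mathbb{C}$. $\ell_2(X)$ is the space of sequences $(x_n)$ in $X$ with $\|(x_n)\|=(\sum_n\|x_n\|^2)^{1/2}<\infty$; $\ell_\infty(Y)$ is the space of bounded sequences in $Y$ with the sup norm. $S_X$ is the unit sphere of $X$, $\mathcal{L}(X,Y)$ the bounded linear operators. A pair $(X,Y)$ has the strong Bishop–Phelps–Bollobás property (sBPBp) if for every $\varepsilon>0$ and every $T\in\mathcal{L}(X,Y)$ with $\|T\|=1$ there exists $\eta=\eta(\varepsilon,T)>0$ such that whenever $x_0\in S_X$ satisfies $\|T(x_0)\|>1-\eta$, there exists $x_1\in S_X$ with $\|T(x_1)\|=1$ and $\|x_1-x_0\|<\varepsilon$. The pair has the uniform sBPBp if the same holds with $\eta=\eta(\varepsilon)$ depending only on $\varepsilon$ (independent of $T$). *)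

From Stdlib Require Import Reals Classical ClassicalEpsilon.
Open Scope R_scope.
Set Implicit Arguments.

Inductive scalars := RealS | ComplexS.

Record Cx := mkCx { Cre : R; Cim : R }.
Definition Cadd (z w : Cx) := mkCx (Cre z + Cre w) (Cim z + Cim w).
Definition Cmul (z w : Cx) :=
  mkCx (Cre z * Cre w - Cim z * Cim w) (Cre z * Cim w + Cim z * Cre w).
Definition Cone := mkCx 1 0.
Definition Cabs (z : Cx) := sqrt (Cre z ^ 2 + Cim z ^ 2).

Definition Kt (s : scalars) : Type :=
  match s with RealS => R | ComplexS => Cx end.
Definition Kadd {s} : Kt s -> Kt s -> Kt s :=
  match s return Kt s -> Kt s -> Kt s with RealS => Rplus | ComplexS => Cadd end.
Definition Kmul {s} : Kt s -> Kt s -> Kt s :=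
  match s return Kt s -> Kt s -> Kt s with RealS => Rmult | ComplexS => Cmul end.
Definition Kone {s} : Kt s :=
  match s return Kt s with RealS => 1 | ComplexS => Cone end.
Definition Kabs {s} : Kt s -> R :=
  match s return Kt s -> R with RealS => Rabs | ComplexS => Cabs end.

Record Banach (s : scalars) := {
  bcar :> Type;
  bzero : bcar;
  badd : bcar -> bcar -> bcar;
  bopp : bcar -> bcar;
  bscal : Kt s -> bcar -> bcar;
  bnorm : bcar -> R;
  b_add_assoc : forall x y z, badd x (badd y z) = badd (badd x y) z;
  b_add_comm : forall x y, badd x y = badd y x;
  b_add_zero : forall x, badd x bzero = x;
  b_add_opp : forall x, badd x (bopp x) = bzero;
  b_scal_one : forall x, bscal Kone x = x;
  b_scal_assoc : forall a b x, bscal a (bscal b x) = bscal (Kmul a b) x;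
  b_scal_distr_l : forall a x y, bscal a (badd x y) = badd (bscal a x) (bscal a y);
  b_scal_distr_r : forall a b x, bscal (Kadd a b) x = badd (bscal a x) (bscal b x);
  b_norm_eq0 : forall x, bnorm x = 0 -> x = bzero;
  b_norm_scal : forall a x, bnorm (bscal a x) = Kabs a * bnorm x;
  b_norm_triangle : forall x y, bnorm (badd x y) <= bnorm x + bnorm y;
  b_complete : forall u : nat -> bcar,
    (forall eps, 0 < eps -> exists N, forall m n, (N <= m)%nat -> (N <= n)%nat ->
        bnorm (badd (u m) (bopp (u n))) < eps) ->
    exists l, forall eps, 0 < eps -> exists N, forall n, (N <= n)%nat ->
        bnorm (badd (u n) (bopp l)) < eps
}.

(** * Supremum of a set of reals (0 if it has no least upper bound) *)
Definition sup_R (E : R -> Prop) : R :=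
  match excluded_middle_informative (exists l, is_lub E l) with
  | left H => proj1_sig (constructive_indefinite_description _ H)
  | right _ => 0
  end.

(** * Normed spaces presented as a subset [ndom] of an ambient type with
    pointwise operations (used to present X, Y, l_2(X), l_oo(Y) uniformly). *)
Record NSpace (s : scalars) := {
  ncar : Type;
  ndom : ncar -> Prop;
  nzero : ncar;
  nadd : ncar -> ncar -> ncar;
  nopp : ncar -> ncar;
  nscal : Kt s -> ncar -> ncar;
  nnorm : ncar -> R
}.

Definition NofB s (X : Banach s) : NSpace s :=
  {| ncar := bcar X; ndom := fun _ => True; nzero := bzero X; nadd := @badd s X;
     nopp := @bopp s X; nscal := @bscal s X; nnorm := @bnorm s X |}.

Definition l2 s (X : Banach s) : NSpace s :=
  {| ncar := nat -> bcar X;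
     ndom := fun x => exists M, forall n,
        sum_f_R0 (fun k => bnorm X (x k) ^ 2) n <= M;
     nzero := fun _ => bzero X;
     nadd := fun x y n => badd X (x n) (y n);
     nopp := fun x n => bopp X (x n);
     nscal := fun a x n => bscal X a (x n);
     nnorm := fun x => sqrt (sup_R (fun r => exists n,
        r = sum_f_R0 (fun k => bnorm X (x k) ^ 2) n)) |}.

Definition linf s (Y : Banach s) : NSpace s :=
  {| ncar := nat -> bcar Y;
     ndom := fun y => exists M, forall n, bnorm Y (y n) <= M;
     nzero := fun _ => bzero Y;
     nadd := fun x y n => badd Y (x n) (y n);
     nopp := fun x n => bopp Y (x n);
     nscal := fun a x n => bscal Y a (x n);
     nnorm := fun y => sup_R (fun r => exists n, r = bnorm Y (y n)) |}.

Definition is_bounded_op {s} (X Y : NSpace s) (T : ncar X -> ncar Y) : Prop :=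
  (forall x, ndom X x -> ndom Y (T x)) /\
  (forall x y, ndom X x -> ndom X y -> T (nadd X x y) = nadd Y (T x) (T y)) /\
  (forall a x, ndom X x -> T (nscal X a x) = nscal Y a (T x)) /\
  (exists C, forall x, ndom X x -> nnorm Y (T x) <= C * nnorm X x).

Definition opnorm {s} (X Y : NSpace s) (T : ncar X -> ncar Y) : R :=
  sup_R (fun r => exists x, ndom X x /\ nnorm X x <= 1 /\ r = nnorm Y (T x)).

Definition sBPBp s (X Y : NSpace s) : Prop :=
  forall eps, 0 < eps ->
  forall T : ncar X -> ncar Y, is_bounded_op X Y T -> opnorm X Y T = 1 ->
  exists eta, 0 < eta /\
    forall x0, ndom X x0 -> nnorm X x0 = 1 -> nnorm Y (T x0) > 1 - eta ->
    exists x1, ndom X x1 /\ nnorm X x1 = 1 /\ nnorm Y (T x1) = 1 /\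
               nnorm X (nadd X x1 (nopp X x0)) < eps.

Definition uniform_sBPBp s (X Y : NSpace s) : Prop :=
  forall eps, 0 < eps ->
  exists eta, 0 < eta /\
  forall T : ncar X -> ncar Y, is_bounded_op X Y T -> opnorm X Y T = 1 ->
    forall x0, ndom X x0 -> nnorm X x0 = 1 -> nnorm Y (T x0) > 1 - eta ->
    exists x1, ndom X x1 /\ nnorm X x1 = 1 /\ nnorm Y (T x1) = 1 /\
               nnorm X (nadd X x1 (nopp X x0)) < eps.

From Stdlib Require Import Reals Lra Lia Classical ClassicalEpsilon FunctionalExtensionality.
Open Scope R_scope.
Set Implicit Arguments.

(* Failure of the uniform sBPBp gives eps > 0 and, for every n, a norm-one
   operator T_n and a unit vector x_n with ||T_n x_n|| > 1 - 1/(n+1), such that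
   every unit vector at which T_n attains its norm is eps-far from x_n.  The
   diagonal operator T z = (T_n z_n)_n from l_2(X) to l_oo(Y) has norm one.  If
   the sBPBp held for T with tolerance min(eps, 1/4), then for large n some unit
   z with ||T z|| = 1 would be within 1/4 of x_n e_n.  Then ||z_n|| >= 3/4, so
   every other coordinate of z has norm below 7/10 and ||T z|| = 1 forces
   ||T_n z_n|| = 1 = ||z_n||: z_n is a norming point of T_n within eps of x_n. *)

Lemma sup_R_lub (E : R -> Prop) l : is_lub E l -> sup_R E = l.
Proof.
  intros [Hub Hleast]. unfold sup_R. destruct excluded_middle_informative as [H|H].
  - destruct constructive_indefinite_description as [l' [Hub' Hleast']]; simpl.
    apply Rle_antisym; [apply Hleast'; exact Hub | apply Hleast; exact Hub'].
  - exfalso; apply H; exists l; split; assumption.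
Qed.

(* [sup_R] returns the junk value [0] when there is no least upper bound. *)
Lemma sup_R_is_lub_neq0 (E : R -> Prop) : sup_R E <> 0 -> is_lub E (sup_R E).
Proof.
  unfold sup_R. destruct excluded_middle_informative as [H|H].
  - destruct constructive_indefinite_description as [l Hl]; simpl; auto.
  - intros C; exfalso; apply C; reflexivity.
Qed.

Lemma sup_R_is_lub (E : R -> Prop) b :
  (exists x, E x) -> (forall x, E x -> x <= b) -> is_lub E (sup_R E).
Proof.
  intros Hne Hb. destruct (completeness E) as [m Hm].
  - exists b; exact Hb.
  - exact Hne.
  - rewrite (sup_R_lub Hm); exact Hm.
Qed.

Lemma sup_R_max (E : R -> Prop) b :
  E b -> (forall x, E x -> x <= b) -> sup_R E = b.
Proof.
  intros Hb H. apply sup_R_lub. split; [exact H|].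
  intros c Hc. apply Hc; exact Hb.
Qed.

Lemma le_of_forall_sub_inv_INR_lt b : (forall n, 1 - / INR (S n) < b) -> 1 <= b.
Proof.
  intros H. apply Rnot_lt_le; intros Hlt.
  destruct (archimed_cor1 (1 - b)) as [N [HN HN0]]; [lra|].
  specialize (H (pred N)). replace (S (pred N)) with N in H by lia. lra.
Qed.

Lemma exists_inv_INR_S_lt eta : 0 < eta -> exists n, / INR (S n) < eta.
Proof.
  intros Heta. destruct (archimed_cor1 eta Heta) as [N [HN HN0]].
  exists (pred N). replace (S (pred N)) with N by lia. exact HN.
Qed.

Lemma sum_f_R0_ge_term (f : nat -> R) i m :
  (forall k, 0 <= f k) -> (i <= m)%nat -> f i <= sum_f_R0 f m.
Proof.
  intros H Hi; induction m; simpl.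
  - replace i with 0%nat by lia; lra.
  - destruct (Nat.eq_dec i (S m)) as [->|Hn].
    + pose proof (cond_pos_sum f m H); lra.
    + specialize (IHm ltac:(lia)). specialize (H (S m)); lra.
Qed.

Lemma sum_f_R0_ge_two_terms (f : nat -> R) i j :
  (forall k, 0 <= f k) -> (i < j)%nat -> f i + f j <= sum_f_R0 f j.
Proof.
  intros H Hij. destruct j; [lia|]. simpl.
  pose proof (@sum_f_R0_ge_term f i j H ltac:(lia)); lra.
Qed.

Definition Kreal (s : scalars) (r : R) : Kt s :=
  match s return Kt s with RealS => r | ComplexS => mkCx r 0 end.

Lemma Kone_real s : @Kone s = Kreal s 1.
Proof. destruct s; reflexivity. Qed.

Lemma Kadd_real s a b : Kadd (Kreal s a) (Kreal s b) = Kreal s (a + b).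
Proof. destruct s; simpl; [reflexivity|]. unfold Cadd; simpl; f_equal; ring. Qed.

Lemma Kabs_real s a : Kabs (Kreal s a) = Rabs a.
Proof.
  destruct s; simpl; [reflexivity|]. unfold Cabs; simpl.
  replace (_ + _) with (Rsqr a) by (unfold Rsqr; ring).
  apply sqrt_Rsqr_abs.
Qed.

Section BanachFacts.
Variables (s : scalars) (X : Banach s).

Lemma badd_0l (x : X) : badd X (bzero X) x = x.
Proof. rewrite b_add_comm; apply b_add_zero. Qed.

Lemma bopp_unique (a b : X) : badd X a b = bzero X -> b = bopp X a.
Proof.
  intros H.
  rewrite <- (b_add_zero X b), <- (b_add_opp X a), b_add_assoc, (b_add_comm X b a), H.
  apply badd_0l.
Qed.

Lemma bscal_0 (x : X) : bscal X (Kreal s 0) x = bzero X.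
Proof.
  set (z := bscal X (Kreal s 0) x).
  assert (Hz : badd X z z = z).
  { unfold z; rewrite <- b_scal_distr_r, Kadd_real, Rplus_0_r; reflexivity. }
  rewrite <- (b_add_opp X z). rewrite <- Hz at 2.
  rewrite <- b_add_assoc, b_add_opp, b_add_zero. reflexivity.
Qed.

Lemma bopp_scal (x : X) : bopp X x = bscal X (Kreal s (-1)) x.
Proof.
  symmetry; apply bopp_unique.
  rewrite <- (b_scal_one X x) at 1. rewrite Kone_real, <- b_scal_distr_r, Kadd_real.
  replace (1 + -1) with 0 by ring. apply bscal_0.
Qed.

Lemma bnorm_opp (x : X) : bnorm X (bopp X x) = bnorm X x.
Proof.
  rewrite bopp_scal, b_norm_scal, Kabs_real.
  replace (Rabs (-1)) with 1 by (rewrite Rabs_left; lra). ring.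
Qed.

Lemma bnorm_0 : bnorm X (bzero X) = 0.
Proof. rewrite <- (bscal_0 (bzero X)), b_norm_scal, Kabs_real, Rabs_R0; ring. Qed.

Lemma bnorm_ge0 (x : X) : 0 <= bnorm X x.
Proof.
  pose proof (b_norm_triangle X x (bopp X x)) as H.
  rewrite b_add_opp, bnorm_0, bnorm_opp in H. lra.
Qed.

Lemma bopp_sub (a b : X) : bopp X (badd X a (bopp X b)) = badd X b (bopp X a).
Proof.
  symmetry; apply bopp_unique.
  rewrite <- b_add_assoc, (b_add_assoc X (bopp X b) b), (b_add_comm X (bopp X b) b),
    b_add_opp, badd_0l, b_add_opp. reflexivity.
Qed.

Lemma bnorm_le_add_sub (a b : X) :
  bnorm X b <= bnorm X a + bnorm X (badd X a (bopp X b)).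
Proof.
  assert (E : b = badd X a (bopp X (badd X a (bopp X b)))).
  { rewrite bopp_sub, b_add_assoc, (b_add_comm X a b), <- b_add_assoc, b_add_opp,
      b_add_zero. reflexivity. }
  rewrite E at 1. eapply Rle_trans; [apply b_norm_triangle|]. rewrite bnorm_opp; lra.
Qed.

End BanachFacts.

Section BoundedOperators.
Variables (s : scalars) (X Y : Banach s) (T : X -> Y).
Hypothesis HT : is_bounded_op (NofB X) (NofB Y) T.

Lemma bounded_op_0 : T (bzero X) = bzero Y.
Proof.
  destruct HT as [_ [_ [Hscal _]]].
  pose proof (Hscal (Kreal s 0) (bzero X) I) as E; simpl in E.
  rewrite !bscal_0 in E. exact E.
Qed.

Lemma bounded_op_norm_le x :
  opnorm (NofB X) (NofB Y) T <> 0 ->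
  bnorm Y (T x) <= opnorm (NofB X) (NofB Y) T * bnorm X x.
Proof.
  intros Hne. set (c := opnorm (NofB X) (NofB Y) T) in *.
  assert (Hub : forall y, bnorm X y <= 1 -> bnorm Y (T y) <= c).
  { intros y Hy. apply (proj1 (sup_R_is_lub_neq0 _ Hne)). exists y; simpl; auto. }
  destruct (Req_dec (bnorm X x) 0) as [H0|H0].
  - apply b_norm_eq0 in H0. subst x. rewrite bounded_op_0, !bnorm_0.
    pose proof (Hub (bzero X) ltac:(rewrite bnorm_0; lra)) as H.
    rewrite bounded_op_0, bnorm_0 in H. lra.
  - set (r := bnorm X x) in *.
    assert (Hr : 0 < r) by (pose proof (bnorm_ge0 X x); unfold r in *; lra).
    assert (Hnorm : forall (Z : Banach s) (z : Z),
               bnorm Z (bscal Z (Kreal s (/ r)) z) = / r * bnorm Z z).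
    { intros Z z. rewrite b_norm_scal, Kabs_real, Rabs_right; [reflexivity|].
      apply Rle_ge, Rlt_le, Rinv_0_lt_compat, Hr. }
    destruct HT as [_ [_ [Hscal _]]].
    pose proof (Hub (bscal X (Kreal s (/ r)) x)) as H.
    pose proof (Hscal (Kreal s (/ r)) x I) as E; simpl in E.
    rewrite E, !Hnorm in H. fold r in H.
    assert (Hle : / r * bnorm Y (T x) <= c) by (apply H; right; field; lra).
    apply Rmult_le_reg_l with (/ r); [apply Rinv_0_lt_compat, Hr|].
    replace (/ r * (c * r)) with c by (field; lra). exact Hle.
Qed.

End BoundedOperators.

Section L2.
Variables (s : scalars) (X : Banach s).

Definition l2_psum (x : nat -> X) (n : nat) : R :=
  sum_f_R0 (fun k => bnorm X (x k) ^ 2) n.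

Lemma l2_sq_ge0 (x : nat -> X) k : 0 <= bnorm X (x k) ^ 2.
Proof. pose proof (bnorm_ge0 X (x k)); nra. Qed.

Lemma l2_psum_le_norm (x : nat -> X) n :
  ndom (l2 X) x -> l2_psum x n <= nnorm (l2 X) x ^ 2.
Proof.
  intros [M HM]. cbn [nnorm l2].
  set (E := fun r => exists n, r = sum_f_R0 (fun k => bnorm X (x k) ^ 2) n).
  assert (Hlub : is_lub E (sup_R E)).
  { apply sup_R_is_lub with M; [exists (l2_psum x 0); exists 0%nat; reflexivity|].
    intros r [m ->]; apply HM. }
  assert (Hn : l2_psum x n <= sup_R E) by (apply Hlub; exists n; reflexivity).
  rewrite pow2_sqrt; [exact Hn|].
  eapply Rle_trans; [|exact Hn]. apply cond_pos_sum, l2_sq_ge0.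
Qed.

Lemma l2_norm_coord_le (x : nat -> X) k :
  ndom (l2 X) x -> bnorm X (x k) <= nnorm (l2 X) x.
Proof.
  intros Hx. pose proof (l2_psum_le_norm k Hx) as H.
  pose proof (@sum_f_R0_ge_term _ k k (l2_sq_ge0 x) (le_n k)).
  pose proof (bnorm_ge0 X (x k)). assert (0 <= nnorm (l2 X) x) by apply sqrt_pos.
  unfold l2_psum in H. nra.
Qed.

Lemma l2_norm_two_coords (x : nat -> X) i j : i <> j ->
  ndom (l2 X) x -> bnorm X (x i) ^ 2 + bnorm X (x j) ^ 2 <= nnorm (l2 X) x ^ 2.
Proof.
  intros Hij Hx. destruct (proj1 (Nat.lt_gt_cases i j) Hij) as [Hlt|Hlt].
  - pose proof (l2_psum_le_norm j Hx).
    pose proof (@sum_f_R0_ge_two_terms _ i j (l2_sq_ge0 x) Hlt).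
    unfold l2_psum in *; lra.
  - pose proof (l2_psum_le_norm i Hx).
    pose proof (@sum_f_R0_ge_two_terms _ j i (l2_sq_ge0 x) Hlt).
    unfold l2_psum in *; lra.
Qed.

Lemma l2_dom_add (x y : nat -> X) :
  ndom (l2 X) x -> ndom (l2 X) y -> ndom (l2 X) (nadd (l2 X) x y).
Proof.
  intros [Mx Hx] [My Hy]. exists (2 * Mx + 2 * My). intros n. cbn [nadd l2].
  eapply Rle_trans with
    (sum_f_R0 (fun k => bnorm X (x k) ^ 2 * 2 + bnorm X (y k) ^ 2 * 2) n).
  - apply sum_Rle; intros k _; cbv beta.
    pose proof (b_norm_triangle X (x k) (y k)).
    pose proof (bnorm_ge0 X (x k)); pose proof (bnorm_ge0 X (y k)).
    pose proof (bnorm_ge0 X (badd X (x k) (y k))).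
    assert (bnorm X (badd X (x k) (y k)) ^ 2 <= (bnorm X (x k) + bnorm X (y k)) ^ 2)
      by (apply pow_incr; split; assumption).
    pose proof (pow2_ge_0 (bnorm X (x k) - bnorm X (y k))). nra.
  - rewrite plus_sum, <- !scal_sum. specialize (Hx n); specialize (Hy n). lra.
Qed.

Lemma l2_dom_opp (x : nat -> X) : ndom (l2 X) x -> ndom (l2 X) (nopp (l2 X) x).
Proof.
  intros [M HM]; exists M; intros n. cbn [nopp l2].
  rewrite (sum_eq _ (fun k => bnorm X (x k) ^ 2)); [apply HM|].
  intros i _; rewrite bnorm_opp; reflexivity.
Qed.

Definition l2_single (v : X) (n : nat) : nat -> X :=
  fun k => if Nat.eq_dec k n then v else bzero X.

Lemma l2_single_eq v n : l2_single v n n = v.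
Proof. unfold l2_single; destruct Nat.eq_dec; [reflexivity | contradiction]. Qed.

Lemma l2_psum_single v n m :
  l2_psum (l2_single v n) m = if Compare_dec.le_dec n m then bnorm X v ^ 2 else 0.
Proof.
  unfold l2_psum, l2_single. induction m; cbn [sum_f_R0].
  - destruct (Compare_dec.le_dec n 0); destruct (Nat.eq_dec 0 n); try lia;
      rewrite ?bnorm_0; ring.
  - rewrite IHm. destruct (Nat.eq_dec (S m) n);
      destruct (Compare_dec.le_dec n (S m)); destruct (Compare_dec.le_dec n m);
      try lia; rewrite ?bnorm_0; ring.
Qed.

Lemma l2_dom_single v n : ndom (l2 X) (l2_single v n).
Proof.
  exists (bnorm X v ^ 2); intros m. change (l2_psum (l2_single v n) m <= bnorm X v ^ 2).
  rewrite l2_psum_single. pose proof (pow2_ge_0 (bnorm X v)).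
  destruct Compare_dec.le_dec; lra.
Qed.

Lemma l2_norm_single v n : nnorm (l2 X) (l2_single v n) = bnorm X v.
Proof.
  cbn [nnorm l2]. rewrite (@sup_R_max _ (bnorm X v ^ 2)).
  - apply sqrt_pow2, bnorm_ge0.
  - exists n. change (bnorm X v ^ 2 = l2_psum (l2_single v n) n).
    rewrite l2_psum_single; destruct Compare_dec.le_dec; [reflexivity|lia].
  - intros r [m ->]. change (l2_psum (l2_single v n) m <= bnorm X v ^ 2).
    rewrite l2_psum_single. pose proof (pow2_ge_0 (bnorm X v)).
    destruct Compare_dec.le_dec; lra.
Qed.

Lemma l2_norm_sub_coord_le (x y : nat -> X) k :
  ndom (l2 X) x -> ndom (l2 X) y ->
  bnorm X (badd X (x k) (bopp X (y k))) <= nnorm (l2 X) (nadd (l2 X) x (nopp (l2 X) y)).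
Proof. intros Hx Hy. exact (l2_norm_coord_le k (l2_dom_add Hx (l2_dom_opp Hy))). Qed.

End L2.

Section Linf.
Variables (s : scalars) (Y : Banach s).

Lemma linf_norm_le (y : nat -> Y) c :
  (forall k, bnorm Y (y k) <= c) -> nnorm (linf Y) y <= c.
Proof.
  intros H. cbn [nnorm linf]. apply (@sup_R_is_lub _ c).
  - exists (bnorm Y (y 0%nat)); exists 0%nat; reflexivity.
  - intros r [k ->]; apply H.
  - intros r [k ->]; apply H.
Qed.

Lemma linf_norm_attained (y : nat -> Y) n :
  (forall k, bnorm Y (y k) <= bnorm Y (y n)) -> nnorm (linf Y) y = bnorm Y (y n).
Proof.
  intros H. apply sup_R_max; [exists n; reflexivity|]. intros r [k ->]; apply H.
Qed.

End Linf.

Definition diag_op {s} {X Y : Banach s} (Tn : nat -> X -> Y) (z : nat -> X) : nat -> Y :=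
  fun k => Tn k (z k).

Section DiagonalOperator.
Variables (s : scalars) (X Y : Banach s) (Tn : nat -> X -> Y).
Hypothesis Tn_bounded : forall n, is_bounded_op (NofB X) (NofB Y) (Tn n).
Hypothesis Tn_opnorm : forall n, opnorm (NofB X) (NofB Y) (Tn n) = 1.

Lemma Tn_norm_le n x : bnorm Y (Tn n x) <= bnorm X x.
Proof.
  pose proof (bounded_op_norm_le (Tn_bounded n) x) as H.
  rewrite Tn_opnorm, Rmult_1_l in H. apply H; lra.
Qed.

Lemma diag_op_coord_le (z : nat -> X) k :
  ndom (l2 X) z -> bnorm Y (diag_op Tn z k) <= nnorm (l2 X) z.
Proof.
  intros Hz. eapply Rle_trans; [apply Tn_norm_le | apply l2_norm_coord_le, Hz].
Qed.

Lemma diag_op_norm_le (z : nat -> X) :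
  ndom (l2 X) z -> nnorm (linf Y) (diag_op Tn z) <= nnorm (l2 X) z.
Proof. intros Hz. apply linf_norm_le; intros k; apply diag_op_coord_le, Hz. Qed.

Lemma diag_op_bounded : is_bounded_op (l2 X) (linf Y) (diag_op Tn).
Proof.
  split; [|split; [|split]].
  - intros z Hz. exists (nnorm (l2 X) z); intros k; apply diag_op_coord_le, Hz.
  - intros x y _ _. apply functional_extensionality; intros k.
    destruct (Tn_bounded k) as [_ [Hadd _]]. exact (Hadd _ _ I I).
  - intros a x _. apply functional_extensionality; intros k.
    destruct (Tn_bounded k) as [_ [_ [Hscal _]]]. exact (Hscal _ _ I).
  - exists 1; intros z Hz. rewrite Rmult_1_l. exact (diag_op_norm_le Hz).
Qed.

Lemma diag_op_single v n :
  nnorm (linf Y) (diag_op Tn (l2_single X v n)) = bnorm Y (Tn n v).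
Proof.
  assert (Hn : diag_op Tn (l2_single X v n) n = Tn n v)
    by (unfold diag_op; rewrite l2_single_eq; reflexivity).
  rewrite (@linf_norm_attained _ _ _ n), Hn; [reflexivity|]. intros k. rewrite Hn.
  unfold diag_op, l2_single. destruct (Nat.eq_dec k n) as [->|_]; [apply Rle_refl|].
  rewrite (bounded_op_0 (Tn_bounded k)), bnorm_0. apply bnorm_ge0.
Qed.

Lemma opnorm_diag_op (xs : nat -> X) :
  (forall n, bnorm X (xs n) = 1) ->
  (forall n, 1 - / INR (S n) < bnorm Y (Tn n (xs n))) ->
  opnorm (l2 X) (linf Y) (diag_op Tn) = 1.
Proof.
  intros Hxs Hnear. apply sup_R_lub; split.
  - intros r [z [Hz [Hz1 ->]]]. eapply Rle_trans; [apply diag_op_norm_le, Hz | exact Hz1].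
  - intros b Hb. apply le_of_forall_sub_inv_INR_lt; intros n.
    eapply Rlt_le_trans; [apply Hnear|]. rewrite <- diag_op_single. apply Hb.
    exists (l2_single X (xs n) n). rewrite l2_norm_single, Hxs.
    split; [apply l2_dom_single | split; [lra | reflexivity]].
Qed.

(* Since [||z n|| >= 3/4], every other coordinate of [z] has norm at most
   [sqrt (1 - (3/4)^2) < 7/10], so the sup norm of [diag_op Tn z] can only be
   attained at coordinate [n]. *)
Lemma diag_op_norm_attained_near_single (z : nat -> X) v n :
  ndom (l2 X) z -> nnorm (l2 X) z = 1 -> nnorm (linf Y) (diag_op Tn z) = 1 ->
  bnorm X v = 1 -> bnorm X (badd X (z n) (bopp X v)) < 1/4 ->
  bnorm X (z n) = 1 /\ bnorm Y (Tn n (z n)) = 1.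
Proof.
  intros Hz Hz1 HTz Hv Hclose.
  assert (Hzn_le : bnorm X (z n) <= 1) by (rewrite <- Hz1; apply l2_norm_coord_le, Hz).
  assert (Hzn_ge : 3/4 <= bnorm X (z n)) by (pose proof (bnorm_le_add_sub X (z n) v); lra).
  assert (Hoff : forall k, k <> n -> bnorm Y (Tn k (z k)) <= 7/10).
  { intros k Hk. eapply Rle_trans; [apply Tn_norm_le|].
    pose proof (l2_norm_two_coords Hk Hz) as H. rewrite Hz1 in H.
    pose proof (bnorm_ge0 X (z k)). nra. }
  assert (Hattained : 1 <= bnorm Y (Tn n (z n))).
  { assert (H : nnorm (linf Y) (diag_op Tn z) <= Rmax (7/10) (bnorm Y (Tn n (z n)))).
    { apply linf_norm_le; intros k. destruct (Nat.eq_dec k n) as [->|Hk]; [apply Rmax_r|].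
      eapply Rle_trans; [apply Hoff, Hk | apply Rmax_l]. }
    rewrite HTz in H. unfold Rmax in H; destruct Rle_dec in H; lra. }
  pose proof (Tn_norm_le n (z n)). split; lra.
Qed.

End DiagonalOperator.

(* [(T, x0)] witnesses that [eta] does not work for [eps] in the definition of the sBPBp. *)
Definition sBPBp_bad_pair {s} {X Y : Banach s} (eps eta : R) (T : X -> Y) (x0 : X) : Prop :=
  is_bounded_op (NofB X) (NofB Y) T /\ opnorm (NofB X) (NofB Y) T = 1 /\
  bnorm X x0 = 1 /\ bnorm Y (T x0) > 1 - eta /\
  forall x1, bnorm X x1 = 1 -> bnorm Y (T x1) = 1 ->
    eps <= bnorm X (badd X x1 (bopp X x0)).

Lemma not_uniform_sBPBp_bad_pairs s (X Y : Banach s) :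
  ~ uniform_sBPBp (NofB X) (NofB Y) ->
  exists eps, 0 < eps /\ exists (Tn : nat -> X -> Y) (xs : nat -> X),
    forall n, sBPBp_bad_pair eps (/ INR (S n)) (Tn n) (xs n).
Proof.
  intros Hnu. apply NNPP; intros Hno. apply Hnu; intros eps Heps.
  apply NNPP; intros Hbad. apply Hno. exists eps; split; [exact Heps|].
  assert (Hex : forall n : nat, exists p : (X -> Y) * X,
             sBPBp_bad_pair eps (/ INR (S n)) (fst p) (snd p)).
  { intros n. apply NNPP; intros Hn. apply Hbad. exists (/ INR (S n)); split.
    { apply Rinv_0_lt_compat, lt_0_INR; lia. }
    intros T HT HoT x0 _ Hx0 HTx0. apply NNPP; intros Hx1. apply Hn.
    exists (T, x0). refine (conj HT (conj HoT (conj Hx0 (conj HTx0 _)))).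
    intros x1 H1 H2. apply Rnot_lt_le; intros Hlt. apply Hx1.
    exists x1; repeat split; assumption. }
  destruct (choice _ Hex) as [f Hf].
  exists (fun n => fst (f n)), (fun n => snd (f n)). exact Hf.
Qed.

Theorem mainTheorem17 (s : scalars) (X Y : Banach s) :
  ~ uniform_sBPBp (NofB X) (NofB Y) ->
  ~ sBPBp (l2 X) (linf Y).
Proof.
  intros Hnu Hs.
  destruct (not_uniform_sBPBp_bad_pairs Hnu) as [eps [Heps [Tn [xs Hbad]]]].
  assert (HTn : forall n, is_bounded_op (NofB X) (NofB Y) (Tn n)) by apply Hbad.
  assert (HTn1 : forall n, opnorm (NofB X) (NofB Y) (Tn n) = 1) by apply Hbad.
  assert (Hxs : forall n, bnorm X (xs n) = 1) by apply Hbad.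
  assert (HTxs : forall n, bnorm Y (Tn n (xs n)) > 1 - / INR (S n)) by apply Hbad.
  assert (Hfar : forall n x1, bnorm X x1 = 1 -> bnorm Y (Tn n x1) = 1 ->
                   eps <= bnorm X (badd X x1 (bopp X (xs n)))) by apply Hbad.
  assert (Heps' : 0 < Rmin eps (1/4)) by (apply Rmin_pos; lra).
  destruct (Hs _ Heps' _ (diag_op_bounded Tn HTn HTn1)
              (opnorm_diag_op Tn HTn HTn1 xs Hxs HTxs)) as [eta [Heta Hnear]].
  destruct (exists_inv_INR_S_lt Heta) as [n Hn].
  destruct (Hnear (l2_single X (xs n) n)) as [z [Hz [Hz1 [HTz Hdist]]]].
  - apply l2_dom_single.
  - rewrite l2_norm_single; apply Hxs.
  - rewrite (diag_op_single Tn HTn). specialize (HTxs n). lra.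
  - pose proof (l2_norm_sub_coord_le n Hz (l2_dom_single X (xs n) n)) as Hzn.
    rewrite l2_single_eq in Hzn.
    pose proof (Rmin_l eps (1/4)); pose proof (Rmin_r eps (1/4)).
    destruct (diag_op_norm_attained_near_single Tn HTn HTn1 (xs n) n Hz Hz1 HTz (Hxs n))
      as [Hzn1 HTzn1]; [lra|].
    pose proof (Hfar n (z n) Hzn1 HTzn1). lra.
Qed.
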